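(* Fix $n$ and $r$ with $0\le r<\lfloor n/2\rfloor$, and let $a=\lfloor n/2\rfloor$. For any prime power $q$, any nontrivial additive character $\psi$ of $\mathbb F_q$ and any rank-one matrix $T\in M_{a,n-a}(\mathbb F_q)$, the number $$\widehat 1_{\mathcal O_r}(T)=\sum_{A\in\mathcal O_r}\psi(\mathrm{trace}(T^tA))$$ is a positive integer, and as $q\to\infty$, $$\widehat 1_{\mathcal O_r}(T)=\left(\frac1{q^r}+o\!\left(\frac1{q^r}\right)\right)\#(\mathcal O_r).$$
   Context: $\mathcal O_r\subset M_{a,n-a}(\mathbb F_q)$ is the set of $a\times(n-a)$ matrices of rank $r$. *)

From HB Require Import structures.
From mathcomp Require Import all_boot all_order all_algebra all_field.
Set Implicit Arguments. Unset Strict Implicit. Unset Printing Implicit Defensive.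
Import Order.TTheory GRing.Theory Num.Theory.
Local Open Scope ring_scope.

Definition Orank (F : finFieldType) (m k r : nat) : {set 'M[F]_(m, k)} :=
  [set A : 'M[F]_(m, k) | \rank A == r].

Definition additive_char (F : finFieldType) (psi : F -> algC) : Prop :=
  psi 0 = 1 /\ forall x y : F, psi (x + y) = psi x * psi y.

Definition nontrivial_char (F : finFieldType) (psi : F -> algC) : Prop :=
  exists x : F, psi x != 1.

Definition fourier_Orank (F : finFieldType) (m k r : nat) (psi : F -> algC)
  (T : 'M[F]_(m, k)) : algC :=
  \sum_(A in Orank F m k r) psi (\tr (T^T *m A)).

From HB Require Import structures.
From mathcomp Require Import all_boot all_order all_algebra all_field.
From mathcomp Require Import zify ring.
Set Implicit Arguments. Unset Strict Implicit. Unset Printing Implicit Defensive.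
Import Order.TTheory GRing.Theory Num.Theory.
Local Open Scope ring_scope.

(* Write N1 for the number of A in O_r with A 0 0 = 1.  Every rank-one T is
   equivalent to the first partial identity, and O_r is stable under
   equivalence and under nonzero scalings; hence for each c the number of
   A in O_r with tr(T^T A) = c equals the number with A 0 0 = c, and this
   number is N1 for every c <> 0.  Orthogonality of the nontrivial character
   psi then collapses the Fourier sum to the integer  #O_r - q N1.
   Counting the triples (A, x, y) with A in O_r and x A y^T = 1 in two ways
   (fixing A, resp. the pair of nonzero vectors x, y) gives
     #O_r (q^(m+1) - q^(m+1-r)) q^(k+1) = (q^(m+1) - 1) (q^(k+1) - 1) q N1,
   from which elementary arithmetic yields q N1 < #O_r (positivity) and
     | (#O_r - q N1) q^r / #O_r - 1 | <= 8 / q        (asymptotics). *)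

Section LinearCounting.

Variable F : finFieldType.
Local Notation q := #|F|.

Lemma card_rowspace s p (C : 'M[F]_(s, p)) :
  #|[set u : 'rV[F]_p | (u <= C)%MS]| = (q ^ \rank C)%N.
Proof.
have -> : [set u : 'rV[F]_p | (u <= C)%MS]
        = [set x *m row_base C | x : 'rV[F]_(\rank C)].
  apply/setP => u; rewrite inE; apply/idP/imsetP.
    by rewrite -(eq_row_base C) => /submxP [x ->]; exists x.
  by case=> x _ ->; rewrite (submx_trans (submxMl _ _)) ?eq_row_base.
rewrite card_imset ?cardsT ?card_mx ?mul1n //.
exact: row_free_inj (row_base_free C).
Qed.

Lemma card_left_kernel p k (B : 'M[F]_(p, k)) :
  #|[set u : 'rV[F]_p | u *m B == 0]| = (q ^ (p - \rank B))%N.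
Proof.
rewrite -mxrank_ker -card_rowspace; apply: eq_card => u.
by rewrite !inE sub_kermx.
Qed.

(* An affine hyperplane  y . w = 1  (w nonzero) has q ^ (K - 1) points: it is
   a translate of the kernel of the rank-one map  y |-> y w^T. *)
Lemma card_dot_eq1 K (w : 'rV[F]_K) : w != 0 ->
  #|[set y : 'rV[F]_K | (y *m w^T) 0 0 == 1]| = (q ^ (K - 1))%N.
Proof.
move=> w_nz.
have [j wj_nz] : exists j, w 0 j != 0.
  apply/existsP; apply: contraR w_nz; rewrite negb_exists => /forallP w0.
  by apply/eqP/matrixP => i l; rewrite (ord1 i) mxE; apply/eqP/negPn/w0.
pose y0 : 'rV[F]_K := (w 0 j)^-1 *: delta_mx 0 j.
have y0w : (y0 *m w^T) 0 0 = 1.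
  rewrite mxE (bigD1 j) //= big1 => [|l lj]; rewrite !mxE.
    by rewrite !eqxx mulr1 addr0 mulVf.
  by rewrite (negbTE lj) andbF mulr0 mul0r.
have rk_w : \rank w^T = 1%N by rewrite mxrank_tr rank_rV w_nz.
rewrite -[X in (K - X)%N]rk_w -card_left_kernel -(card_preimset _ (addIr y0)).
apply: eq_card => z; rewrite !inE mulmxDl mxE y0w -subr_eq0 addrK.
apply/eqP/eqP => [z0|->]; last by rewrite mxE.
by apply/matrixP => i l; rewrite (ord1 i) (ord1 l) z0 mxE.
Qed.

Lemma card_nonzero_rows M : #|[set x : 'rV[F]_M | x != 0]| = (q ^ M - 1)%N.
Proof.
have -> : [set x : 'rV[F]_M | x != 0] = [set~ 0] by apply/setP => x; rewrite !inE.
by rewrite cardsC1 card_mx mul1n subn1.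
Qed.

End LinearCounting.

Lemma card_stable_preim (T : finType) (O : {set T}) (h : T -> T) (p : pred T) :
  injective h -> {mono h : A / A \in O} ->
  #|[set A in O | p (h A)]| = #|[set A in O | p A]|.
Proof.
move=> h_inj hO; rewrite -(card_preimset [set A in O | p A] h_inj).
by apply: eq_card => A; rewrite !inE hO.
Qed.

Section RankLevelSets.

Variables (F : finFieldType) (m k r : nat).
Local Notation O := (Orank F m.+1 k.+1 r).

Lemma Orank_equiv (P : 'M[F]_m.+1) (Q : 'M[F]_k.+1) (A : 'M[F]_(m.+1, k.+1)) :
  P \in unitmx -> Q \in unitmx -> (P *m A *m Q \in O) = (A \in O).
Proof.
move=> Pu Qu; rewrite !inE mxrankMfree ?row_free_unit //.
by rewrite eqmxMfull // row_full_unit.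
Qed.

Lemma trace_pid1 (B : 'M[F]_(m.+1, k.+1)) :
  \tr ((pid_mx 1 : 'M[F]_(m.+1, k.+1))^T *m B) = B 0 0.
Proof.
rewrite tr_pid_mx /mxtrace (bigD1 ord0) //= big1 => [|i i_nz]; rewrite mxE.
  rewrite (bigD1 ord0) //= big1 => [|j j_nz]; rewrite !mxE.
    by rewrite eqxx mul1r !addr0.
  by case: j j_nz => -[|j] // ? _; rewrite mul0r.
by rewrite big1 // => j _; case: i i_nz => -[|i] // ? _; rewrite !mxE andbF mul0r.
Qed.

(* Up to equivalence a rank-one T is the first partial identity, so the linear
   form A |-> tr(T^T A) is the (0,0) entry of an equivalent matrix. *)
Lemma rank1_trace_form (T : 'M[F]_(m.+1, k.+1)) : \rank T = 1%N ->
  exists P : 'M[F]_m.+1, exists Q : 'M[F]_k.+1,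
    [/\ P \in unitmx, Q \in unitmx &
        forall A, \tr (T^T *m A) = (P *m A *m Q) 0 0].
Proof.
move=> rT; exists (col_ebase T)^T, (row_ebase T)^T.
split; rewrite ?unitmx_tr ?col_ebase_unit ?row_ebase_unit // => A.
rewrite -trace_pid1 -{1}(mulmx_ebase T) rT !trmx_mul.
by rewrite -!mulmxA mxtrace_mulC !mulmxA.
Qed.

Lemma card_trace_level (T : 'M[F]_(m.+1, k.+1)) (c : F) : \rank T = 1%N ->
  #|[set A in O | \tr (T^T *m A) == c]| = #|[set A in O | A 0 0 == c]|.
Proof.
move=> /rank1_trace_form [P [Q [Pu Qu trE]]].
have -> : [set A in O | \tr (T^T *m A) == c]
        = [set A in O | (P *m A *m Q) 0 0 == c].
  by apply/setP => A; rewrite !inE trE.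
apply: (@card_stable_preim _ _ (fun A => P *m A *m Q) (fun A => A 0 0 == c)).
  by move=> A B /(can_inj (mulmxK Qu))/(can_inj (mulKmx Pu)).
by move=> A; apply: Orank_equiv.
Qed.

(* Scaling by c != 0 preserves O, so all nonzero values of A 0 0 are equally frequent. *)
Lemma card_entry_level (c : F) : c != 0 ->
  #|[set A in O | A 0 0 == c]| = #|[set A in O | A 0 0 == 1]|.
Proof.
move=> c_nz.
pose at_c (A : 'M[F]_(m.+1, k.+1)) := A 0 0 == c.
rewrite -(@card_stable_preim _ _ _ at_c (scalerI c_nz)).
  by apply: eq_card => A; rewrite !inE /at_c mxE -{2}[c]mulr1 (inj_eq (mulfI c_nz)).
by move=> A; rewrite !inE mxrank_scale_nz.
Qed.

End RankLevelSets.

Lemma sum_indicator (T : finType) (p : pred T) :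
  (\sum_(x : T) p x)%N = #|[set x | p x]|.
Proof. by rewrite -sum1dep_card [RHS]big_mkcond. Qed.

Lemma sum_indicator_in (T : finType) (X : {pred T}) (p : pred T) :
  (\sum_(x in X) p x)%N = #|[set x in X | p x]|.
Proof.
rewrite -sum1dep_card [RHS]big_mkcond [LHS]big_mkcond /=; apply: eq_bigr => x _.
by case: (x \in X); case: (p x).
Qed.

Lemma sum_by_level (T C : finType) (V : nmodType) (X : {pred T}) (f : T -> C)
    (g : C -> V) :
  \sum_(A in X) g (f A) = \sum_(c : C) g c *+ #|[set A in X | f A == c]|.
Proof.
rewrite (partition_big f xpredT) //=; apply: eq_bigr => c _.
rewrite (eq_bigr (fun=> g c)) => [|A /andP[_ /eqP->]] //.
by rewrite sumr_const; congr (_ *+ _); apply: eq_card => A; rewrite inE.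
Qed.

Section DoubleCounting.

Variables (F : finFieldType) (m k r : nat).
Local Notation q := #|F|.
Local Notation O := (Orank F m.+1 k.+1 r).
Local Notation N1 := #|[set A in O | A 0 0 == 1]|.

(* For A of rank r, the pairs (x, y) with x A y^T = 1: x must avoid the
   (m.+1 - r)-dimensional left kernel of A, then y ranges over a hyperplane. *)
Lemma count_pairs_fixed_matrix (A : 'M[F]_(m.+1, k.+1)) : \rank A = r ->
  (\sum_(x : 'rV[F]_m.+1) \sum_(y : 'rV[F]_k.+1)
      ((x *m A *m y^T) ord0 ord0 == 1%R))%N
  = ((q ^ m.+1 - q ^ (m.+1 - r)) * q ^ k)%N.
Proof.
move=> rA.
transitivity (\sum_(x : 'rV[F]_m.+1) (x *m A != 0%R) * q ^ k)%N.
  apply: eq_bigr => x _; rewrite sum_indicator.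
  case: (eqVneq (x *m A) 0) => [xA0|xA_nz].
    apply/eqP; rewrite cards_eq0; apply/eqP/setP => y.
    by rewrite !inE xA0 mul0mx mxE eq_sym oner_eq0.
  rewrite mul1n; have := card_dot_eq1 xA_nz; rewrite subn1 /= => <-.
  by apply: eq_card => y; rewrite !inE -[y in RHS]trmxK -trmx_mul [_^T _ _]mxE.
rewrite -big_distrl /= sum_indicator; congr (_ * _)%N.
have := cardsC [set x : 'rV[F]_m.+1 | x *m A == 0].
rewrite card_left_kernel card_mx mul1n rA => <-.
by rewrite addKn; apply: eq_card => x; rewrite !inE.
Qed.

(* For nonzero x and y, x^T y has rank one and tr((x^T y)^T A) = x A y^T, so
   exactly N1 matrices of O satisfy x A y^T = 1. *)
Lemma count_matrices_fixed_pair (x : 'rV[F]_m.+1) (y : 'rV[F]_k.+1) :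
  (\sum_(A in O) ((x *m A *m y^T) ord0 ord0 == 1%R))%N
  = ((x != 0%R) * (y != 0%R) * N1)%N.
Proof.
have no_sol : (x == 0) || (y == 0) ->
    #|[set A in O | (x *m A *m y^T) 0 0 == 1]| = 0%N.
  move=> xy0; apply/eqP; rewrite cards_eq0; apply/eqP/setP => A; rewrite !inE.
  case/orP: xy0 => /eqP->; rewrite ?mul0mx ?trmx0 ?mulmx0 mxE;
    by rewrite [0 == _]eq_sym oner_eq0 andbF.
rewrite (sum_indicator_in O (fun A => (x *m A *m y^T) 0 0 == 1)).
case: (eqVneq x 0) => [x0|x_nz]; first by rewrite no_sol ?x0 ?eqxx.
case: (eqVneq y 0) => [y0|y_nz]; first by rewrite no_sol ?y0 ?eqxx ?orbT.
have rk_xy : \rank (x^T *m y) = 1%N.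
  by rewrite mxrankMfree ?mxrank_tr ?rank_rV ?x_nz // /row_free rank_rV y_nz.
rewrite !mul1n -(card_trace_level r 1 rk_xy); apply: eq_card => A.
rewrite !inE trmx_mul trmxK mxtrace_mulC mulmxA mxtrace_mulC mulmxA.
by rewrite /mxtrace big_ord1.
Qed.

(* Counting triples (A, x, y) with A in O and x A y^T = 1 in two ways. *)
Lemma double_count :
  (#|O| * ((q ^ m.+1 - q ^ (m.+1 - r)) * q ^ k.+1))%N
  = ((q ^ m.+1 - 1) * (q ^ k.+1 - 1) * (q * N1))%N.
Proof.
pose Z := (\sum_(A in O) \sum_(x : 'rV[F]_m.+1) \sum_(y : 'rV[F]_k.+1)
             ((x *m A *m y^T) ord0 ord0 == 1%R))%N.
have Z_by_matrices : Z = (#|O| * ((q ^ m.+1 - q ^ (m.+1 - r)) * q ^ k))%N.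
  rewrite /Z -sum1_card big_distrl /=; apply: eq_bigr => A.
  by rewrite inE => /eqP rA; rewrite mul1n count_pairs_fixed_matrix.
have Z_by_pairs : Z = ((q ^ m.+1 - 1) * (q ^ k.+1 - 1) * N1)%N.
  rewrite /Z exchange_big /=.
  under eq_bigr => x _ do rewrite exchange_big /=.
  under eq_bigr => x _ do under eq_bigr => y _ do rewrite count_matrices_fixed_pair.
  set n1 := N1; rewrite -!card_nonzero_rows -!sum_indicator -mulnA big_distrl /=.
  apply: eq_bigr => x _; rewrite big_distrl big_distrr /=.
  by apply: eq_bigr => y _; rewrite mulnA.
rewrite [(_ ^ k.+1)%N in LHS]expnS (mulnCA _ #|F|) (mulnCA #|O|).
by rewrite -Z_by_matrices Z_by_pairs mulnCA.
Qed.

End DoubleCounting.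

(* Orthogonality: a nontrivial additive character sums to zero over F, since
   the sum is fixed by multiplication by psi x != 1. *)
Lemma sum_nontrivial_char (F : finFieldType) (psi : F -> algC) :
  additive_char psi -> nontrivial_char psi -> \sum_(c : F) psi c = 0.
Proof.
case=> _ psiD [x psix].
have shift : psi x * \sum_(c : F) psi c = \sum_(c : F) psi c.
  rewrite mulr_sumr [RHS](reindex_inj (addrI x)) /=.
  by apply: eq_bigr => c _; rewrite psiD.
have : (psi x - 1) * \sum_(c : F) psi c = 0 by rewrite mulrBl shift mul1r subrr.
by move/eqP; rewrite mulf_eq0 subr_eq0 (negbTE psix) => /eqP.
Qed.

(* The Fourier coefficient of 1_{O_r} at a rank-one T: grouping A by the value
   c = tr(T^T A), all levels c != 0 have the size N1 of {A 0 0 = 1}, so the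
   character sum collapses to  #O_r - q * N1. *)
Lemma fourier_rank1 (F : finFieldType) m k r (psi : F -> algC)
    (T : 'M[F]_(m.+1, k.+1)) :
  additive_char psi -> nontrivial_char psi -> \rank T = 1%N ->
  fourier_Orank r psi T = (#|Orank F m.+1 k.+1 r|)%:R
     - (#|F| * #|[set A in Orank F m.+1 k.+1 r | A 0 0 == 1]|)%:R.
Proof.
move=> psi_add psi_nt rT; have [psi0 _] := psi_add.
set O := Orank F m.+1 k.+1 r; set N1 := #|[set A in O | A 0 0 == 1]|.
pose level (c : F) := (#|[set A in O | A 0 0 == c]|)%:R : algC.
pose excess (c : F) := level c - N1%:R.
have excess_nz c : c != 0 -> excess c = 0.
  by move=> c_nz; rewrite /excess /level card_entry_level ?subrr.
have sum_excess (g : F -> algC) : \sum_c excess c * g c = excess 0 * g 0.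
  rewrite (bigD1 0) //= big1 ?addr0 // => c c_nz.
  by rewrite excess_nz ?mul0r.
have level_split (g : F -> algC) :
    \sum_c level c * g c = excess 0 * g 0 + N1%:R * \sum_c g c.
  rewrite -sum_excess mulr_sumr -big_split /=.
  by apply: eq_bigr => c _; rewrite -mulrDl subrK.
have fourierE : fourier_Orank r psi T = \sum_c level c * psi c.
  rewrite /fourier_Orank (sum_by_level _ (fun A => \tr (T^T *m A))).
  by apply: eq_bigr => c _; rewrite card_trace_level // -mulr_natl /level.
have cardOE : (#|O|)%:R = \sum_c level c * 1 :> algC.
  rewrite -sum1_card natr_sum.
  rewrite (sum_by_level _ (fun A : 'M[F]_(m.+1, k.+1) => A 0 0) (fun=> 1 : algC)).
  by apply: eq_bigr => c _; rewrite mulr1.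
rewrite fourierE cardOE !level_split psi0 sum_nontrivial_char // mulr0 addr0.
by rewrite sumr_const (eq_card (B := F)) // -mulr_natl natrM; ring.
Qed.

(* The error numerator is at most 2 X Y / q and the denominator at least X Y / 4. *)
Lemma error_numerator_bound (q a b Y : nat) :
  (2 <= q)%N -> (q <= a)%N -> (0 < b)%N -> (a * b <= Y)%N ->
  ((b - 1) * (a * b + Y - 1) * q <= 8 * ((a * b - 1) * (Y - 1)))%N.
Proof.
move=> q_ge2 q_le_a b_pos X_le_Y.
have bq_le_X : (b * q <= a * b)%N by rewrite mulnC leq_mul.
have num_le : ((b - 1) * (a * b + Y - 1) * q <= b * q * (2 * Y))%N.
  by rewrite mulnAC; apply: leq_mul; [exact: leq_mul (leq_subr _ _) (leqnn _) | lia].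
have XY_le : forall X Y', (2 <= X)%N -> (2 <= Y')%N ->
    (X * (2 * Y') <= 8 * ((X - 1) * (Y' - 1)))%N.
  by move=> [|[|x]] // [|[|y]] // _ _; rewrite !subn1 /=; nia.
apply: leq_trans num_le (leq_trans (leq_mul bq_le_X (leqnn _)) (XY_le _ _ _ _)); nia.
Qed.

Section RatioArithmetic.

(* Abstract form of the double-counting identity: X = a b = q^m.+1,
   Y = q^k.+1, a = q^(m.+1 - r), b = q^r, P = q N1. *)
Variables q a b Y N P : nat.
Hypotheses (q_ge2 : (2 <= q)%N) (q_le_a : (q <= a)%N) (b_pos : (0 < b)%N)
  (X_le_Y : (a * b <= Y)%N) (N_pos : (0 < N)%N)
  (count : (N * ((a * b - a) * Y) = (a * b - 1) * (Y - 1) * P)%N).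

Lemma P_lt_N : (P < N)%N.
Proof.
have D_pos : (0 < (a * b - 1) * (Y - 1))%N by nia.
have E_lt_D : ((a * b - a) * Y < (a * b - 1) * (Y - 1))%N by nia.
rewrite -(ltn_pmul2r D_pos) mulnC -count ltn_pmul2l //.
Qed.

Lemma ratio_error (R : numFieldType) :
  ((N%:R - P%:R) * b%:R / N%:R - 1 : R)
  = - (((b - 1) * (a * b + Y - 1))%:R / ((a * b - 1) * (Y - 1))%:R).
Proof.
have X_pos : (1 <= a * b)%N by nia.
have Y_pos : (1 <= Y)%N by nia.
have a_le_X : (a <= a * b)%N by nia.
have XY_pos : (1 <= a * b + Y)%N by nia.
have countR := congr1 (fun n => n%:R : R) count.
rewrite /= !natrM !natrB // natrM in countR.
rewrite !natrM !natrB // natrD natrM.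
have NR : N%:R != 0 :> R by rewrite pnatr_eq0 -lt0n.
have XR : a%:R * b%:R - 1 != 0 :> R.
  by rewrite subr_eq0 -natrM pnatr_eq1 gtn_eqF //; nia.
have YR : Y%:R - 1 != 0 :> R by rewrite subr_eq0 pnatr_eq1 gtn_eqF //; nia.
have -> : P%:R = N%:R * ((a%:R * b%:R - a%:R) * Y%:R)
                   / ((a%:R * b%:R - 1) * (Y%:R - 1)) :> R.
  by rewrite countR; field; rewrite XR YR.
by field; rewrite NR XR YR.
Qed.

Lemma ratio_error_bound (R : numFieldType) :
  `|(N%:R - P%:R) * b%:R / N%:R - 1 : R| <= 8%:R / q%:R.
Proof.
have q_pos : (0 < q)%N by lia.
have D_pos : (0 < (a * b - 1) * (Y - 1))%N by nia.
rewrite ratio_error normrN ger0_norm ?divr_ge0 //.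
rewrite ler_pdivrMr ?ltr0n // mulrAC ler_pdivlMr ?ltr0n // -!natrM ler_nat.
exact: error_numerator_bound.
Qed.

End RatioArithmetic.

Section RankOneCoefficient.

Variables (F : finFieldType) (m k r : nat).
Hypotheses (r_lt_m : (r < m.+1)%N) (m_le_k : (m <= k)%N).
Local Notation q := #|F|.
Local Notation O := (Orank F m.+1 k.+1 r).
Local Notation N1 := #|[set A in O | A 0 0 == 1]|.

Local Notation a := (q ^ (m.+1 - r))%N.
Local Notation b := (q ^ r)%N.

Lemma ab_eq : (a * b = q ^ m.+1)%N.
Proof. by rewrite -expnD subnK // ltnW. Qed.

Lemma ratio_sizes :
  [/\ (2 <= q)%N, (q <= a)%N, (0 < b)%N, (a * b <= q ^ k.+1)%N & (0 < #|O|)%N].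
Proof.
have q_ge2 : (2 <= q)%N by apply/card_gt1P; exists 0, 1; rewrite eq_sym oner_neq0.
rewrite ab_eq; split => //.
- by rewrite -{1}(expn1 q) leq_pexp2l // ?subn_gt0 // ltnW.
- by rewrite expn_gt0 ltnW.
- by rewrite leq_pexp2l // ltnW.
- by apply/card_gt0P; exists (pid_mx r); rewrite inE rank_pid_mx //; lia.
Qed.

Lemma ratio_count :
  (#|O| * ((a * b - a) * q ^ k.+1) = (a * b - 1) * (q ^ k.+1 - 1) * (q * N1))%N.
Proof. by rewrite ab_eq double_count. Qed.

Lemma fourier_rank1_pos (psi : F -> algC) (T : 'M[F]_(m.+1, k.+1)) :
  additive_char psi -> nontrivial_char psi -> \rank T = 1%N ->
  exists n : nat, (0 < n)%N /\ fourier_Orank r psi T = n%:R.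
Proof.
move=> psi_add psi_nt rT.
have [q_ge2 q_le_a b_pos X_le_Y O_pos] := ratio_sizes.
have qN1_lt := P_lt_N q_ge2 q_le_a b_pos X_le_Y O_pos ratio_count.
exists (#|O| - q * N1)%N; split; first by rewrite subn_gt0.
by rewrite fourier_rank1 // natrB // ltnW.
Qed.

Lemma fourier_rank1_error (psi : F -> algC) (T : 'M[F]_(m.+1, k.+1)) :
  additive_char psi -> nontrivial_char psi -> \rank T = 1%N ->
  `| fourier_Orank r psi T * (q%:R ^+ r) / (#|O|)%:R - 1 | <= 8%:R / q%:R.
Proof.
move=> psi_add psi_nt rT.
have [q_ge2 q_le_a b_pos X_le_Y O_pos] := ratio_sizes.
rewrite fourier_rank1 // -natrX.
exact: (ratio_error_bound q_ge2 q_le_a b_pos X_le_Y O_pos ratio_count algC).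
Qed.

End RankOneCoefficient.

Theorem fact8p2 (n r : nat) (hr : (r < n./2)%N) :
  (forall (F : finFieldType) (psi : F -> algC) (T : 'M[F]_(n./2, n - n./2)),
      additive_char psi -> nontrivial_char psi -> \rank T = 1%N ->
      exists m : nat, (0 < m)%N /\ fourier_Orank r psi T = m%:R)
  /\
  (forall eps : algC, 0 < eps ->
    exists Q : nat,
      forall (F : finFieldType) (psi : F -> algC) (T : 'M[F]_(n./2, n - n./2)),
        (Q <= #|F|)%N ->
        additive_char psi -> nontrivial_char psi -> \rank T = 1%N ->
        `| fourier_Orank r psi T * (#|F|%:R ^+ r)
             / (#|Orank F (n./2) (n - n./2) r|)%:R - 1 | < eps).
Proof.
have halves : (n./2 <= n - n./2)%N.
  by have := odd_double_half n; rewrite -addnn; lia.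
move: hr halves; move: (n./2)%N (n - n./2)%N => [//|m] [//|k] r_lt_m.
rewrite ltnS => m_le_k; split=> [F psi T|]; first exact: fourier_rank1_pos.
move=> eps eps_pos; exists (Num.bound (8%:R / eps)) => F psi T Q_le_q psi_add psi_nt rT.
apply: le_lt_trans (fourier_rank1_error r_lt_m m_le_k psi_add psi_nt rT) _.
have q_pos : 0 < #|F|%:R :> algC by rewrite ltr0n; apply/card_gt0P; exists 0.
rewrite ltr_pdivrMr // -ltr_pdivrMl // mulrC.
apply: lt_le_trans (archi_boundP _) _; first by rewrite divr_ge0 ?ltW.
by rewrite ler_nat.
Qed.
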